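(* Let $\mathcal{M}=\{1,\dots,m\}$, let $Q=(q_{ij})$ be an $m\times m$ generator matrix ($q_{ij}\ge0$ for $i\ne j$, $q_{ii}=-\sum_{j\ne i}q_{ij}$), let $r>0$, and for $i\in\mathcal{M}$ let $N(i),R(i),c(i),h(i)>0$ and $\theta(i)\in\mathbb{R}$. Then the algebraic Riccati equation $$\frac{\varphi^2(i)}{R(i)}+r\varphi(i)-\sum_{j\in\mathcal{M}}q_{ij}\varphi(j)-N(i)=0,\quad i\in\mathcal{M},$$ has a unique solution $(\varphi(1),\dots,\varphi(m))$ with $\varphi(i)\ge0$ for all $i\in\mathcal{M}$, and for this $\varphi$ the linear system $$\Big(r+\frac{\varphi(i)}{R(i)}\Big)\psi(i)-\sum_{j\in\mathcal{M}}q_{ij}\psi(j)-(h(i)-\theta(i))\varphi(i)+N(i)c(i)=0,\quad i\in\mathcal{M},$$ has a unique solution $(\psi(1),\dots,\psi(m))$. *)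

From mathcomp Require Import all_boot all_order all_algebra.
From mathcomp Require Import reals.
Set Implicit Arguments. Unset Strict Implicit. Unset Printing Implicit Defensive.
Import Order.TTheory GRing.Theory Num.Theory.
Local Open Scope ring_scope.

Definition generator_matrix (R : realType) (m : nat) (Q : 'M[R]_m) : Prop :=
  (forall i j : 'I_m, i != j -> 0 <= Q i j) /\
  (forall i : 'I_m, Q i i = - \sum_(j < m | j != i) Q i j).

Definition riccati_eq (R : realType) (m : nat) (Q : 'M[R]_m) (r : R)
  (Rw N : 'I_m -> R) (phi : 'I_m -> R) : Prop :=
  forall i : 'I_m,
    phi i ^+ 2 / Rw i + r * phi i - \sum_(j < m) Q i j * phi j - N i = 0.

Definition psi_eq (R : realType) (m : nat) (Q : 'M[R]_m) (r : R)
  (Rw N c h theta : 'I_m -> R) (phi psi : 'I_m -> R) : Prop :=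
  forall i : 'I_m,
    (r + phi i / Rw i) * psi i - \sum_(j < m) Q i j * psi j
      - (h i - theta i) * phi i + N i * c i = 0.

From mathcomp Require Import all_boot all_order all_algebra.
From mathcomp Require Import boolp classical_sets reals ring lra.
Set Implicit Arguments. Unset Strict Implicit. Unset Printing Implicit Defensive.
Import Order.TTheory GRing.Theory Num.Theory.
Local Open Scope ring_scope.

(* With a_i = r - q_ii the Riccati equation reads
   phi_i^2 / R_i + a_i phi_i = N_i + sum_{j <> i} q_ij phi_j.  Taking the
   nonnegative root of this scalar quadratic defines a map T which is monotone
   on nonnegative vectors (q_ij >= 0 off the diagonal), lifts 0 and lowers the
   constant vector M = (sum_i N_i) / r, so the Knaster-Tarski argument on the
   box [0, M]^m yields a nonnegative solution.  Everything else rests on a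
   maximum principle: for w > 0 the matrix diag(w) - Q is strictly diagonally
   dominant, hence injective and so invertible.  The difference of two
   nonnegative Riccati solutions phi, phi' is in the kernel of such a matrix,
   with w_i = r + (phi_i + phi'_i) / R_i, and the system for psi is of this
   form with w_i = r + phi_i / R_i. *)

Section Generator.
Variables (R : realType) (m : nat) (Q : 'M[R]_m).
Hypothesis HQ : generator_matrix Q.

Lemma generator_offdiag_ge0 i j : j != i -> 0 <= Q i j.
Proof. by case: HQ => Hoff _ ji; apply: Hoff; rewrite eq_sym. Qed.

Lemma generator_offdiag_sum i : \sum_(j | j != i) Q i j = - Q i i.
Proof. by case: HQ => _ ->; rewrite opprK. Qed.

Lemma generator_diag_le0 i : Q i i <= 0.
Proof.
rewrite -[Q i i]opprK -generator_offdiag_sum oppr_le0.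
by apply: sumr_ge0 => j /generator_offdiag_ge0.
Qed.

Lemma generator_max_principle (w x : 'I_m -> R) :
  (forall i, 0 < w i) -> (forall i, w i * x i = \sum_j Q i j * x j) ->
  forall i, x i = 0.
Proof.
move=> w_gt0 Hx i.
have [k _ max_k] := @arg_maxP _ _ 'I_m i xpredT (fun j => `|x j|) isT.
have off_k : (w k - Q k k) * x k = \sum_(j | j != k) Q k j * x j.
  by rewrite mulrBl Hx (bigD1 k) //=; ring.
have wQ_ge0 : 0 <= w k - Q k k.
  by have := w_gt0 k; have := generator_diag_le0 k; lra.
have le_off : `|\sum_(j | j != k) Q k j * x j| <= - Q k k * `|x k|.
  rewrite -generator_offdiag_sum mulr_suml; apply: le_trans (ler_norm_sum _ _ _) _.
  apply: ler_sum => j jk; rewrite normrM ger0_norm ?generator_offdiag_ge0 //.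
  by apply: ler_wpM2l; [exact: generator_offdiag_ge0 | exact: max_k].
have : w k * `|x k| <= 0 by move: le_off; rewrite -off_k normrM ger0_norm //; lra.
rewrite pmulr_rle0 // normr_le0 => /eqP xk0.
by apply/eqP; rewrite -normr_le0 (le_trans (max_k i isT)) // xk0 normr0.
Qed.

Lemma generator_shift_inj (w x y : 'I_m -> R) : (forall i, 0 < w i) ->
  (forall i, w i * x i - \sum_j Q i j * x j = w i * y i - \sum_j Q i j * y j) ->
  x = y.
Proof.
move=> w_gt0 Exy; apply/funext => i; apply/eqP; rewrite -subr_eq0; apply/eqP.
apply: (@generator_max_principle w (fun i => x i - y i) w_gt0) => {}i /=.
rewrite mulrBr (eq_bigr _ (fun j _ => mulrBr _ _ _)) sumrB.
have := Exy i; lra.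
Qed.

Lemma generator_shift_surj (w b : 'I_m -> R) : (forall i, 0 < w i) ->
  exists x : 'I_m -> R, forall i, w i * x i - \sum_j Q i j * x j = b i.
Proof.
move=> w_gt0.
pose A : 'M[R]_m := diag_mx (\row_i w i) - Q.
have AE (v : 'cV[R]_m) i : (A *m v) i 0 = w i * v i 0 - \sum_j Q i j * v j 0.
  by rewrite mulmxBl mul_diag_mx !mxE.
have A_unit : A \in unitmx.
  rewrite unitmxE unitfE; apply/negP => /eqP detA0.
  have /det0P [v v_neq0 vA] : \det A^T == 0 by rewrite det_tr detA0.
  have Av : A *m v^T = 0 by rewrite -[A]trmxK -trmx_mul vA trmx0.
  have v0 : forall i, v^T i 0 = 0.
    apply: (@generator_max_principle w (fun i => v^T i 0) w_gt0) => i.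
    by apply/eqP; rewrite -subr_eq0 -AE Av mxE.
  move/eqP: v_neq0; apply; apply/matrixP => i j.
  by have := v0 j; rewrite (ord1 i) !mxE.
exists (fun i => (invmx A *m \col_i b i) i 0) => i.
by rewrite -AE mulKVmx // mxE.
Qed.

End Generator.

Lemma box_fixpoint (R : realType) (I : Type) (T : (I -> R) -> I -> R) (lo hi : I -> R) :
  let in_box f := forall i, lo i <= f i <= hi i in
  (forall i, lo i <= hi i) -> (forall i, lo i <= T lo i) -> (forall i, T hi i <= hi i) ->
  (forall f g, in_box f -> in_box g ->
     (forall i, f i <= g i) -> forall i, T f i <= T g i) ->
  exists f, in_box f /\ T f = f.
Proof.
move=> in_box lo_hi lo_T T_hi T_mono.
pose S f := in_box f /\ forall i, f i <= T f i.
pose s i := sup [set f i | f in S].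
have S_ub i : ubound [set f i | f in S] (hi i).
  by move=> _ [f [Bf _] <-]; case/andP: (Bf i).
have le_s f i : S f -> f i <= s i.
  by move=> Sf; apply: (ub_le_sup (ex_intro _ _ (S_ub i))); exists f.
have lo_box : in_box lo by move=> i; rewrite lexx lo_hi.
have hi_box : in_box hi by move=> i; rewrite lexx lo_hi.
have S_lo : S lo by split.
have s_box : in_box s.
  move=> i; rewrite le_s //=; apply: ge_sup (S_ub i).
  by exists (lo i); exists lo.
have s_le_Ts i : s i <= T s i.
  apply: ge_sup => [|_ [f [Bf f_le_Tf] <-]]; first by exists (lo i); exists lo.
  by apply: le_trans (f_le_Tf i) _; apply: T_mono => // j; apply: le_s.
have T_box f : in_box f -> in_box (T f).
  move=> Bf i; apply/andP; split.
    by apply: le_trans (lo_T i) _; apply: T_mono => // j; case/andP: (Bf j).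
  by apply: le_trans (T_hi i); apply: T_mono => // j; case/andP: (Bf j).
have S_Ts : S (T s) by split; [apply: T_box | apply: T_mono => //; apply: T_box].
exists s; split => //; apply/funext => i.
by apply/le_anti; rewrite s_le_Ts le_s.
Qed.

Section QuadraticInverse.
Variables (R : rcfType) (a w : R).
Hypotheses (a_gt0 : 0 < a) (w_gt0 : 0 < w).

Definition quad (x : R) := x ^+ 2 / w + a * x.
Definition quad_inv (y : R) := (Num.sqrt (a ^+ 2 * w ^+ 2 + 4 * w * y) - a * w) / 2.

Let discr_ge0 y : 0 <= y -> 0 <= a ^+ 2 * w ^+ 2 + 4 * w * y.
Proof. by move=> y_ge0; rewrite addr_ge0 ?mulr_ge0 ?sqr_ge0 // ltW. Qed.

Lemma quad_inv_ge0 y : 0 <= y -> 0 <= quad_inv y.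
Proof.
move=> y_ge0; rewrite divr_ge0 // subr_ge0.
rewrite -(ger0_norm (ltW (mulr_gt0 a_gt0 w_gt0))) -sqrtr_sqr ler_sqrt ?discr_ge0 //.
by rewrite exprMn lerDl mulr_ge0 // mulr_ge0 // ltW.
Qed.

Lemma ler_quad_inv y y' : 0 <= y -> y <= y' -> quad_inv y <= quad_inv y'.
Proof.
move=> y_ge0 yy'; rewrite /quad_inv ler_pM2r ?invr_gt0 // lerD2r.
by rewrite ler_sqrt ?discr_ge0 ?(le_trans y_ge0) // lerD2l ler_pM2l // mulr_gt0.
Qed.

Lemma quad_invK y : 0 <= y -> quad (quad_inv y) = y.
Proof.
move=> y_ge0; have := sqr_sqrtr (discr_ge0 y_ge0).
rewrite /quad /quad_inv; set s := Num.sqrt _ => s2.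
have w_neq0 : w != 0 by rewrite gt_eqF.
have -> : ((s - a * w) / 2) ^+ 2 / w + a * ((s - a * w) / 2)
          = (s ^+ 2 - a ^+ 2 * w ^+ 2) / (4 * w) by field.
by rewrite s2; field.
Qed.

Lemma quadK x : 0 <= x -> quad_inv (quad x) = x.
Proof.
move=> x_ge0; rewrite /quad_inv /quad.
have w_neq0 : w != 0 by rewrite gt_eqF.
have -> : a ^+ 2 * w ^+ 2 + 4 * w * (x ^+ 2 / w + a * x) = (a * w + 2 * x) ^+ 2.
  by field.
rewrite sqrtr_sqr ger0_norm; last by have := mulr_gt0 a_gt0 w_gt0; lra.
by field.
Qed.

End QuadraticInverse.

Section RiccatiExistence.
Variables (R : realType) (m : nat) (Q : 'M[R]_m) (r : R) (N Rw : 'I_m -> R).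
Hypotheses (HQ : generator_matrix Q) (r_gt0 : 0 < r).
Hypotheses (N_gt0 : forall i, 0 < N i) (Rw_gt0 : forall i, 0 < Rw i).

Let a i := r - Q i i.
Let G (phi : 'I_m -> R) i := N i + \sum_(j | j != i) Q i j * phi j.
Let T (phi : 'I_m -> R) i := quad_inv (a i) (Rw i) (G phi i).

Let a_gt0 i : 0 < a i.
Proof. by rewrite /a subr_gt0 (le_lt_trans (generator_diag_le0 HQ i)). Qed.

Let G_ge0 phi i : (forall j, 0 <= phi j) -> 0 <= G phi i.
Proof.
move=> phi_ge0; apply: addr_ge0; first exact: ltW.
by apply: sumr_ge0 => j ji; rewrite mulr_ge0 ?generator_offdiag_ge0.
Qed.

Let G_mono phi psi i : (forall j, phi j <= psi j) -> G phi i <= G psi i.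
Proof.
move=> le_phi_psi; rewrite lerD2l; apply: ler_sum => j ji.
by apply: ler_wpM2l; rewrite ?generator_offdiag_ge0.
Qed.

Let riccati_eq_quad phi :
  (forall i, quad (a i) (Rw i) (phi i) = G phi i) -> riccati_eq Q r Rw N phi.
Proof.
move=> E i; have := E i; rewrite (bigD1 i) //= /quad /G /a.
set s := \sum_(j | j != i) _; lra.
Qed.

Lemma riccati_exists :
  exists phi, riccati_eq Q r Rw N phi /\ forall i, 0 <= phi i.
Proof.
pose M := (\sum_i N i) / r.
have M_ge0 : 0 <= M.
  by apply: divr_ge0; [apply: sumr_ge0 => i _ | idtac]; apply: ltW.
have N_le_rM i : N i <= r * M.
  rewrite mulrC divfK ?gt_eqF // (bigD1 i) //= lerDl.
  by apply: sumr_ge0 => j _; apply: ltW.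
have T_M i : T (fun=> M) i <= M.
  rewrite -[leRHS](quadK (a_gt0 i) (Rw_gt0 i) M_ge0) ler_quad_inv ?G_ge0 //.
  rewrite /G -mulr_suml generator_offdiag_sum // /quad /a.
  have := N_le_rM i; have : 0 <= M ^+ 2 / Rw i by rewrite divr_ge0 ?sqr_ge0 ?ltW.
  lra.
have [phi [phi_box Tphi]] : exists phi,
    (forall i, 0 <= phi i <= M) /\ T phi = phi.
  apply: (box_fixpoint (lo := fun=> 0)) => // [i|f g Bf _ fg i].
  - by rewrite quad_inv_ge0 ?G_ge0.
  - by rewrite ler_quad_inv ?G_ge0 ?G_mono // => j; case/andP: (Bf j).
have phi_ge0 i : 0 <= phi i by case/andP: (phi_box i).
exists phi; split=> //; apply: riccati_eq_quad => i.
by rewrite -Tphi quad_invK ?G_ge0 // Tphi.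
Qed.

End RiccatiExistence.

Lemma riccati_nonneg_uniq (R : realType) (m : nat) (Q : 'M[R]_m) (r : R)
    (N Rw phi phi' : 'I_m -> R) :
  generator_matrix Q -> 0 < r -> (forall i, 0 < Rw i) ->
  riccati_eq Q r Rw N phi -> (forall i, 0 <= phi i) ->
  riccati_eq Q r Rw N phi' -> (forall i, 0 <= phi' i) -> phi' = phi.
Proof.
move=> HQ r_gt0 Rw_gt0 Ephi phi_ge0 Ephi' phi'_ge0.
have w_gt0 i : 0 < r + (phi' i + phi i) / Rw i.
  by have := divr_ge0 (addr_ge0 (phi'_ge0 i) (phi_ge0 i)) (ltW (Rw_gt0 i)); lra.
apply: (generator_shift_inj HQ w_gt0) => i.
have -> : \sum_j Q i j * phi' j = phi' i ^+ 2 / Rw i + r * phi' i - N i.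
  by have := Ephi' i; lra.
have -> : \sum_j Q i j * phi j = phi i ^+ 2 / Rw i + r * phi i - N i.
  by have := Ephi i; lra.
by field; rewrite gt_eqF.
Qed.

Theorem lemma5p1 (R : realType) (m : nat) (Q : 'M[R]_m) (r : R)
  (N Rw c h : 'I_m -> R) (theta : 'I_m -> R) :
  generator_matrix Q -> 0 < r ->
  (forall i, 0 < N i) -> (forall i, 0 < Rw i) ->
  (forall i, 0 < c i) -> (forall i, 0 < h i) ->
  exists phi : 'I_m -> R,
    [/\ riccati_eq Q r Rw N phi, (forall i, 0 <= phi i),
        (forall phi' : 'I_m -> R,
           riccati_eq Q r Rw N phi' -> (forall i, 0 <= phi' i) -> phi' = phi)
      & exists psi : 'I_m -> R,
          psi_eq Q r Rw N c h theta phi psi /\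
          (forall psi' : 'I_m -> R, psi_eq Q r Rw N c h theta phi psi' -> psi' = psi)].
Proof.
move=> HQ r_gt0 N_gt0 Rw_gt0 _ _.
have [phi [Ephi phi_ge0]] := riccati_exists HQ r_gt0 N_gt0 Rw_gt0.
have w_gt0 i : 0 < r + phi i / Rw i.
  by have := divr_ge0 (phi_ge0 i) (ltW (Rw_gt0 i)); lra.
exists phi; split => // [phi' Ephi' phi'_ge0|].
  exact: riccati_nonneg_uniq Ephi phi_ge0 Ephi' phi'_ge0.
have [psi Epsi] := generator_shift_surj HQ
  (fun i => (h i - theta i) * phi i - N i * c i) w_gt0.
exists psi; split => [i|psi' Epsi']; first by have := Epsi i; lra.
apply: (generator_shift_inj HQ w_gt0) => i.
by rewrite Epsi; have := Epsi' i; lra.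
Qed.
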